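(* Let $\mathbb F$ be a field and let $(S_1,m_1),\dots,(S_n,m_n)$ be finite multisets in $\mathbb F$ such that $0\in S_i$ and $m_i(0)=1$ for every $i$. Put $S=S_1\times\dots\times S_n$ and $d(S_i)=\sum_{s\in S_i}m_i(s)$. Let $H_1,\dots,H_k$ be hyperplanes in $\mathbb F^n$ such that every point $\mathbf s\in S\setminus\{\mathbf 0\}$ is contained in at least $|m(\mathbf s)|-n+1$ of the hyperplanes $H_1,\dots,H_k$, and $\mathbf 0$ is contained in none of them. Then $k\ge d(S_1)+\dots+d(S_n)-n$.
   Context: A multiset $(S_i,m_i)$ consists of a nonempty finite subset $S_i\subseteq\mathbb F$ and multiplicities $m_i:S_i\to\{1,2,\dots\}$. For $\mathbf s=(s_1,\dots,s_n)\in S$, $|m(\mathbf s)|=m_1(s_1)+\dots+m_n(s_n)$. A hyperplane in $\mathbb F^n$ is the zero set of a polynomial $a_1x_1+\dots+a_nx_n-b$ with $a_i,b\in\mathbb F$, not all $a_i$ zero. *)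

From mathcomp Require Import all_boot all_order all_algebra.
Set Implicit Arguments. Unset Strict Implicit. Unset Printing Implicit Defensive.
Import GRing.Theory.
Local Open Scope ring_scope.

(* A hyperplane in F^n is given by (a, b) with a : F^n (a row vector) nonzero; its zero set
   is { x | sum_i a_i x_i - b = 0 }. *)
Definition hyperplane (F : fieldType) (n : nat) := ('rV[F]_n * F)%type.

Definition is_hyperplane (F : fieldType) (n : nat) (H : hyperplane F n) : Prop :=
  exists i : 'I_n, H.1 ord0 i != 0.

Definition on_hyperplane (F : fieldType) (n : nat) (H : hyperplane F n)
  (x : 'I_n -> F) : bool :=
  \sum_(i < n) H.1 ord0 i * x i - H.2 == 0.

Definition num_containing (F : fieldType) (n : nat) (Hs : seq (hyperplane F n))
  (x : 'I_n -> F) : nat :=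
  count (fun H => on_hyperplane H x) Hs.

Definition msum (F : fieldType) (n : nat) (m : 'I_n -> F -> nat) (x : 'I_n -> F) : nat :=
  (\sum_(i < n) m i (x i))%N.

Definition dmult (F : fieldType) (Si : seq F) (mi : F -> nat) : nat :=
  (\sum_(s <- Si) mi s)%N.

From mathcomp Require Import all_boot all_order all_algebra.
From mathcomp Require Import mpoly zify.
Set Implicit Arguments. Unset Strict Implicit. Unset Printing Implicit Defensive.
Import GRing.Theory.
Local Open Scope ring_scope.

(* Write d_i = d(S_i) and D^a p(s) for the a-th Hasse derivative of p at s, the coefficient of
   (X - s)^a in p.  The d_i values D^a p(s), s in S_i, a < m_i(s), determine a polynomial p of
   degree < d_i, so there are weights w_i(s, a) with sum w_i(s, a) D^a p(s) = [X^(d_i - 1)] p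
   for all such p; testing this on prod_(s <> 0) (X - s)^(m_i(s)) shows w_i(0, 0) <> 0.
   Apply the tensor product of these functionals to P = prod_j l_j, where l_j is the affine
   form of H_j.  If k < sum_i d_i - n, every monomial of P has some exponent b_i < d_i - 1,
   so the result is 0.  But at a grid point s <> 0, P vanishes to order |m(s)| - n + 1, which
   exceeds the total degree of every multi-index a with a_i < m_i(s_i), so only the origin
   contributes, with the nonzero value prod_i w_i(0, 0) * P(0). *)

Section Hasse.
Variable F : fieldType.
Implicit Types (s : F) (p : {poly F}) (S : seq F) (m : F -> nat).

Definition hasse s (a : nat) p : F := (p \Po ('X + s%:P))`_a.

Lemma hasseXn s a b : hasse s a 'X^b = (('X + s%:P) ^+ b)`_a.
Proof. by rewrite /hasse comp_Xn_poly. Qed.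

Lemma hasse_expansion s a p d : (size p <= d)%N ->
  hasse s a p = \sum_(b < d) p`_b * hasse s a 'X^b.
Proof.
move=> le_pd; rewrite [LHS]/hasse coef_comp_poly.
rewrite (big_ord_widen _ (fun b => p`_b * (('X + s%:P) ^+ b)`_a) le_pd) big_mkcond.
apply: eq_bigr => b _; rewrite hasseXn; case: ltnP => // le_pb.
by rewrite nth_default // mul0r.
Qed.

Lemma dvdp_exp_XsubC_hasse s k p :
  reflect (forall a, (a < k)%N -> hasse s a p = 0) (('X - s%:P) ^+ k %| p).
Proof.
apply: (iffP idP) => [/dvdpP [q ->] a lt_ak | hasse0].
  rewrite /hasse comp_polyM rmorphXn /= comp_polyB comp_polyX comp_polyC addrK.
  by rewrite coefMXn lt_ak.
set q := p \Po ('X + s%:P).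
have q_divX : q = \poly_(i < size q) q`_(i + k) * 'X^k.
  apply/polyP => i; rewrite coefMXn; case: ltnP => [lt_ik | le_ki].
    exact: hasse0.
  rewrite coef_poly subnK //; case: ltnP => // le_qi.
  by rewrite nth_default // (leq_trans le_qi) // leq_subr.
apply/dvdpP; exists (\poly_(i < size q) q`_(i + k) \Po ('X - s%:P)).
by rewrite -comp_Xn_poly -comp_polyM -q_divX comp_polyXaddC_K.
Qed.

Lemma hasse_poly_eq0 S m p : uniq S -> (size p <= \sum_(s <- S) m s)%N ->
  (forall s, s \in S -> forall a, (a < m s)%N -> hasse s a p = 0) -> p = 0.
Proof.
elim: S p => [|s0 S IH] p /=.
  by move=> _; rewrite big_nil leqn0 size_poly_eq0 => /eqP.
case/andP=> s0S uS; rewrite big_cons => size_p hasse0.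
have /dvdpP [r p_eq] : ('X - s0%:P) ^+ m s0 %| p.
  by apply/dvdp_exp_XsubC_hasse; apply: hasse0; apply: mem_head.
suff r0 : r = 0 by rewrite p_eq r0 mul0r.
have [// | r_neq0] := eqVneq r 0.
apply: IH => // [|s sS].
  move: size_p; rewrite p_eq size_mul ?size_exp_XsubC //; last first.
    by rewrite -size_poly_eq0 size_exp_XsubC.
  by rewrite addnS addnC leq_add2l.
apply/dvdp_exp_XsubC_hasse.
have coprime_s_s0 : coprimep (('X - s%:P) ^+ m s) (('X - s0%:P) ^+ m s0).
  apply/coprimep_expl/coprimep_expr/coprimep_XsubC2.
  by rewrite subr_eq0; apply: contraNneq s0S => ->.
rewrite -(Gauss_dvdpl _ coprime_s_s0) -p_eq.
by apply/dvdp_exp_XsubC_hasse => a; apply: hasse0; rewrite inE sS orbT.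
Qed.

Local Notation origin := (0 : F, 0%N).

Definition hasse_nodes S m : seq (F * nat) := [seq (s, a) | s <- S, a <- iota 0 (m s)].

Lemma size_hasse_nodes S m : size (hasse_nodes S m) = (\sum_(s <- S) m s)%N.
Proof.
by rewrite size_allpairs_dep sumnE big_map; apply: eq_bigr => s _; rewrite size_iota.
Qed.

Lemma mem_hasse_nodes S m s a : ((s, a) \in hasse_nodes S m) = (s \in S) && (a < m s)%N.
Proof.
apply/allpairsPdep/andP => [[x [y [xS yI [-> ->]]]] | [sS am]].
  by rewrite mem_iota in yI.
by exists s, a; rewrite mem_iota.
Qed.

Lemma uniq_hasse_nodes S m : uniq S -> uniq (hasse_nodes S m).
Proof.
move=> uS; apply: allpairs_uniq_dep => // [x _|]; first exact: iota_uniq.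
by move=> [x1 y1] [x2 y2] _ _ [-> ->].
Qed.

Definition hasse_mx (L : seq (F * nat)) : 'M[F]_(size L) :=
  \matrix_(b, j) hasse (nth origin L j).1 (nth origin L j).2 'X^b.

Lemma hasse_mx_unit S m : uniq S -> hasse_mx (hasse_nodes S m) \in unitmx.
Proof.
set L := hasse_nodes S m => uS; rewrite -row_free_unit -kermx_eq0.
apply/eqP/row_matrixP => k; rewrite row0; set u := row k _.
have uM : u *m hasse_mx L = 0 by rewrite -row_mul mulmx_ker row0.
have size_u : (size (rVpoly u) <= size L)%N by apply: size_poly.
suff /(congr1 (@poly_rV _ (size L))) : rVpoly u = 0 by rewrite rVpolyK linear0.
apply: (hasse_poly_eq0 (m := m) uS); first by rewrite -size_hasse_nodes.
move=> s sS a lt_am; have sa_L : (s, a) \in L by rewrite mem_hasse_nodes sS.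
have j_lt : (index (s, a) L < size L)%N by rewrite index_mem.
have := congr1 (fun M : 'rV_(size L) => M 0 (Ordinal j_lt)) uM; rewrite !mxE => <-.
rewrite (hasse_expansion _ _ size_u); apply: eq_bigr => b _.
by rewrite coef_rVpoly_ord /u /hasse_mx !mxE nth_index.
Qed.

(* The top weights express [p`_(size L).-1] as a combination of the Hasse coefficients of [p]
   at the nodes of [L]: they are obtained by inverting [hasse_mx L] on the last unit vector. *)
Definition top_weight (L : seq (F * nat)) (j : nat) : F :=
  \sum_(k < size L | k == j :> nat)
     (invmx (hasse_mx L) *m \col_(b < size L) (b.+1 == size L)%:R) k 0.

Lemma top_weight_out L j : (size L <= j)%N -> top_weight L j = 0.
Proof.
move=> le_Lj; rewrite /top_weight big_pred0 // => k.
by apply: contraTF (ltn_ord k) => /eqP ->; rewrite -leqNgt.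
Qed.

Lemma sum_top_weight_hasse L p N : hasse_mx L \in unitmx ->
  (size p <= size L)%N -> (size L <= N)%N ->
  \sum_(j < N) top_weight L j * hasse (nth origin L j).1 (nth origin L j).2 p
    = p`_(size L).-1.
Proof.
move=> M_unit size_p le_LN.
have coef_last : \sum_(b < size L) p`_b * (b.+1 == size L)%:R = p`_(size L).-1.
  case: (size L) size_p => [|d] size_p.
    by rewrite big_ord0; move: size_p; rewrite leqn0 size_poly_eq0 => /eqP ->; rewrite coef0.
  rewrite big_ord_recr /= eqxx mulr1 big1 ?add0r // => b _.
  by rewrite eqSS ltn_eqF ?mulr0.
set d := size L; set M := hasse_mx L.
pose w := invmx M *m \col_(b < d) (b.+1 == d)%:R.
have Mw : M *m w = \col_(b < d) (b.+1 == d)%:R by rewrite mulmxA mulmxV // mul1mx.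
rewrite (bigID (fun j : 'I_N => j < d)%N) /= [X in _ + X]big1 ?addr0; last first.
  by move=> j; rewrite -leqNgt => /top_weight_out ->; rewrite mul0r.
rewrite -(big_ord_widen N
  (fun j => top_weight L j * hasse (nth origin L j).1 (nth origin L j).2 p)) //.
transitivity (\sum_(b < d) p`_b * (M *m w) b 0).
  under eq_bigr do rewrite (hasse_expansion _ _ size_p) big_distrr.
  rewrite exchange_big; apply: eq_bigr => b _; rewrite [in RHS]mxE big_distrr.
  apply: eq_bigr => j _; rewrite /top_weight (big_pred1 j) // -/w [M b j]mxE /=.
  by rewrite mulrCA (mulrC (w j 0)).
by rewrite Mw -coef_last; apply: eq_bigr => b _; rewrite mxE.
Qed.

Lemma top_weight_origin_neq0 S m : uniq S -> 0 \in S -> m 0 = 1%N ->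
  top_weight (hasse_nodes S m) (index origin (hasse_nodes S m)) != 0.
Proof.
set L := hasse_nodes S m => uS S0 m0.
have origin_L : origin \in L by rewrite mem_hasse_nodes S0 m0.
have j0_lt : (index origin L < size L)%N by rewrite index_mem.
set j0 := Ordinal j0_lt.
pose p0 := \prod_(s <- S | s != 0) ('X - s%:P) ^+ m s.
have monic_p0 : p0 \is monic by apply: monic_prod => s _; apply/monic_exp/monicXsubC.
have size_p0 : size p0 = size L.
  rewrite /p0 -big_filter size_prod_seq => [|s _]; last first.
    by rewrite -size_poly_eq0 size_exp_XsubC.
  under eq_bigr do rewrite size_exp_XsubC -addn1.
  rewrite big_split /= sum1_size -addSn addnK big_filter.
  by rewrite size_hasse_nodes (bigD1_seq 0) //= m0.
have := sum_top_weight_hasse (hasse_mx_unit m uS) (eq_leq size_p0) (leqnn _).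
rewrite -[X in p0`_X.-1]size_p0 -lead_coefE (monicP monic_p0) -/L (bigD1 j0) //= big1 ?addr0.
  by apply: contra_eqN => /eqP ->; rewrite mul0r eq_sym oner_eq0.
move=> j /negbTE j_neq_j0.
have := mem_nth origin (ltn_ord j); case nth_j : (nth origin L j) => [s a] /=.
rewrite mem_hasse_nodes => /andP[sS lt_am].
have [s0 | s_neq0] := eqVneq s 0.
  move: lt_am nth_j; rewrite s0 m0 ltnS leqn0 => /eqP -> nth_j.
  have : j == j0 by rewrite -val_eqE /= -nth_j index_uniq // uniq_hasse_nodes.
  by rewrite j_neq_j0.
have /dvdp_exp_XsubC_hasse hasse0 : ('X - s%:P) ^+ m s %| p0.
  rewrite /p0 -big_filter (bigD1_seq s) ?filter_uniq ?mem_filter ?s_neq0 //=.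
  exact: dvdp_mulIl.
by rewrite hasse0 ?mulr0.
Qed.
End Hasse.

Section Multivariate.
Variables (F : fieldType) (n : nat).
Local Notation mp := {mpoly F[n]}.
Implicit Types (p q : mp) (s : 'I_n -> F) (H : hyperplane F n).

Definition deg_le p t := forall a : 'X_{1..n}, (t < mdeg a)%N -> p@_a = 0.
Definition order_ge p t := forall a : 'X_{1..n}, (mdeg a < t)%N -> p@_a = 0.

Lemma deg_leM p q t1 t2 : deg_le p t1 -> deg_le q t2 -> deg_le (p * q) (t1 + t2).
Proof.
move=> hp hq a lt_a; rewrite mcoeffM big1 // => k /eqP a_eq.
have := congr1 mdeg a_eq; rewrite mdegD => mdeg_a.
have [lt1 | le1] := ltnP t1 (mdeg k.1); first by rewrite hp // mul0r.
rewrite hq ?mulr0 // ltnNge; apply: contraTN lt_a => le2.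
by rewrite -leqNgt mdeg_a leq_add.
Qed.

Lemma order_geM p q t1 t2 : order_ge p t1 -> order_ge q t2 -> order_ge (p * q) (t1 + t2).
Proof.
move=> hp hq a lt_a; rewrite mcoeffM big1 // => k /eqP a_eq.
have := congr1 mdeg a_eq; rewrite mdegD => mdeg_a.
have [lt1 | le1] := ltnP (mdeg k.1) t1; first by rewrite hp // mul0r.
rewrite hq ?mulr0 // ltnNge; apply: contraTN lt_a => le2.
by rewrite -leqNgt mdeg_a leq_add.
Qed.

Lemma order_ge_le p t u : (u <= t)%N -> order_ge p t -> order_ge p u.
Proof. by move=> le_ut p_t a lt_a; apply: p_t (leq_trans lt_a le_ut). Qed.

Definition shift s : n.-tuple mp := [tuple 'X_i + (s i)%:MP | i < n].

Lemma mcoeff_prod_univariate (q : 'I_n -> {poly F}) (a : 'X_{1..n}) :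
  (\prod_i (map_poly (@mpolyC n F) (q i)).['X_i])@_a = \prod_i (q i)`_(a i).
Proof.
pose K := (\sum_i size (q i) + mdeg a).+1.
have size_qK i : (size (map_poly (@mpolyC n F) (q i)) <= K)%N.
  by rewrite size_map_poly /K ltnW // ltnS (bigD1 i) //= -addnA leq_addr.
have aK i : (a i < K)%N.
  by rewrite /K ltnS (leq_trans _ (leq_addl _ _)) // mdegE (bigD1 i) //= leq_addr.
under eq_bigr => i _ do rewrite (horner_coef_wide _ (size_qK i)).
under eq_bigr => i _ do under eq_bigr => j _ do rewrite coef_map /= mul_mpolyC.
rewrite bigA_distr_bigA /= raddf_sum /=.
have prodXE (f : {ffun 'I_n -> 'I_K}) :
    \prod_i ('X_i : mp) ^+ f i = 'X_[[multinom (f i : nat) | i < n]].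
  by rewrite [RHS]mpolyXE_id; apply: eq_bigr => i _; rewrite mnmE.
pose fa : {ffun 'I_n -> 'I_K} := [ffun i => Ordinal (aK i)].
rewrite (bigD1 fa) //= [X in _ + X]big1 => [|f f_neq_fa];
  rewrite scaler_prod mcoeffZ prodXE mcoeffX.
  have -> : [multinom (fa i : nat) | i < n] = a by apply/mnmP => i; rewrite mnmE ffunE.
  by rewrite eqxx mulr1 addr0; apply: eq_bigr => i _; rewrite ffunE.
case: eqP => [fa_eq | _]; last by rewrite mulr0.
case/eqP: f_neq_fa; apply/ffunP => i; apply/val_inj.
by rewrite ffunE /= -fa_eq mnmE.
Qed.

Lemma mcoeff_shiftX s (b a : 'X_{1..n}) :
  ('X_[b] \mPo shift s)@_a = \prod_i hasse (s i) (a i) 'X^(b i).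
Proof.
under [RHS]eq_bigr do rewrite hasseXn.
rewrite -mcoeff_prod_univariate comp_mpolyX; congr mcoeff; apply: eq_bigr => i _.
rewrite tnth_mktuple rmorphXn /= horner_exp map_polyXaddC.
by rewrite hornerD hornerX hornerC.
Qed.

Lemma mcoeff_shift p s a :
  (p \mPo shift s)@_a = \sum_(b <- msupp p) p@_b * \prod_i hasse (s i) (a i) 'X^(b i).
Proof.
rewrite {1}(mpolyE p) (raddf_sum (comp_mpoly (shift s))) (raddf_sum (mcoeff a)).
apply: eq_bigr => b _.
by rewrite /= comp_mpolyZ mcoeffZ mcoeff_shiftX.
Qed.

Definition affine_form H : mp := \sum_i H.1 ord0 i *: 'X_i - H.2%:MP.

Definition hyperplanes_poly (Hs : seq (hyperplane F n)) : mp :=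
  \prod_(H <- Hs) affine_form H.

Lemma mcoeff_linear (c : 'I_n -> F) (a : 'X_{1..n}) : mdeg a != 1%N ->
  (\sum_i c i *: 'X_i : mp)@_a = 0.
Proof.
move=> mdeg_a; rewrite raddf_sum big1 // => i _; rewrite /= mcoeffZ mcoeffX.
by case: eqP => [ia | _]; [move: mdeg_a; rewrite -ia mdeg1 | rewrite mulr0].
Qed.

Lemma affine_form_shift s H : affine_form H \mPo shift s =
  \sum_i H.1 ord0 i *: 'X_i + (\sum_i H.1 ord0 i * s i - H.2)%:MP.
Proof.
rewrite /affine_form comp_mpolyB comp_mpolyC raddf_sum /= mpolyCB raddf_sum /= addrA.
congr (_ - _); rewrite -big_split /=; apply: eq_bigr => i _.
rewrite comp_mpolyZ comp_mpolyXU -tnth_nth tnth_mktuple scalerDr; congr (_ + _).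
by rewrite -mul_mpolyC -mpolyCM.
Qed.

Lemma deg_le_hyperplanes_poly Hs : deg_le (hyperplanes_poly Hs) (size Hs).
Proof.
elim: Hs => [|H Hs IH].
  by move=> a lt_a; rewrite /hyperplanes_poly big_nil mcoeff1 -mdeg_eq0 gtn_eqF.
rewrite /hyperplanes_poly big_cons -cat1s size_cat; apply: deg_leM IH => a lt_a.
rewrite mcoeffB mcoeff_linear ?mcoeffC; last by rewrite neq_ltn lt_a orbT.
by rewrite -mdeg_eq0 gtn_eqF ?(ltn_trans _ lt_a) // mulr0 subrr.
Qed.

Lemma order_ge_hyperplanes_poly_shift Hs s :
  order_ge (hyperplanes_poly Hs \mPo shift s) (num_containing Hs s).
Proof.
elim: Hs => [|H Hs IH] //=; rewrite /hyperplanes_poly big_cons rmorphM /=.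
rewrite /num_containing /=; case on_H : (on_hyperplane H s); last first.
  by rewrite add0n -[X in order_ge _ X]add0n; apply: order_geM.
apply: order_geM IH => a; rewrite ltnS leqn0 mdeg_eq0 => /eqP ->.
by rewrite affine_form_shift mcoeffD mcoeff_linear ?mdeg0 // (eqP on_H) mcoeffC mul0r addr0.
Qed.

Lemma mcoeff0_hyperplanes_poly_shift Hs s : (hyperplanes_poly Hs \mPo shift s)@_0 =
  \prod_(H <- Hs) (\sum_i H.1 ord0 i * s i - H.2).
Proof.
rewrite /hyperplanes_poly rmorph_prod /= -[mcoeff 0 _]/(mcoeff 0%MM _) rmorph_prod.
apply: eq_bigr => H _; rewrite affine_form_shift /= mcoeffD mcoeff_linear ?mdeg0 //.
by rewrite mcoeffC eqxx mulr1 add0r.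
Qed.

Section WeightedHasseSum.
Variables (S : 'I_n -> seq F) (m : 'I_n -> F -> nat).
Local Notation origin := (0 : F, 0%N).
Let L i := hasse_nodes (S i) (m i).
Let N := (\sum_i size (L i)).+1.

Definition hasse_node (f : {ffun 'I_n -> 'I_N}) i : F * nat := nth origin (L i) (f i).

(* The tensor product of the top-weight functionals of the [L i], applied to [p].  All [f i]
   range over one type 'I_N; indices beyond [size (L i)] carry weight 0 by [top_weight_out]. *)
Definition weighted_hasse_sum p : F :=
  \sum_(f : {ffun 'I_n -> 'I_N}) (\prod_i top_weight (L i) (f i)) *
    (p \mPo shift (fun i => (hasse_node f i).1))@_[multinom (hasse_node f i).2 | i < n].

Lemma size_hasse_nodes_lt i : (size (L i) < N)%N.
Proof. by rewrite ltnS (bigD1 i) //= leq_addr. Qed.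

Hypothesis uniqS : forall i, uniq (S i).

Lemma weighted_hasse_sum_eq0 p D : deg_le p D -> (D + n < \sum_i size (L i))%N ->
  weighted_hasse_sum p = 0.
Proof.
move=> deg_p lt_Dn; rewrite /weighted_hasse_sum.
under eq_bigr do rewrite mcoeff_shift big_distrr.
rewrite exchange_big big1_seq // => b /andP[_ b_supp] /=.
have mdeg_b : (mdeg b <= D)%N.
  by rewrite leqNgt; apply: contraL b_supp => /deg_p; rewrite mcoeff_msupp => ->; rewrite eqxx.
have [i lt_bi] : exists i, ((b i).+1 < size (L i))%N.
  apply/existsP; apply/contraLR: lt_Dn; rewrite negb_exists -leqNgt => /forallP le_L.
  apply: (@leq_trans (mdeg b + n)); last by rewrite leq_add2r.
  rewrite mdegE -[n in (_ + n)%N]card_ord -sum1_card -big_split /=.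
  by apply: leq_sum => i _; rewrite addn1 leqNgt le_L.
transitivity (p@_b * \prod_i \sum_(j < N) top_weight (L i) j *
    hasse (nth origin (L i) j).1 (nth origin (L i) j).2 'X^(b i)).
  rewrite bigA_distr_bigA big_distrr; apply: eq_bigr => f _ /=.
  rewrite mulrCA big_split /=; do 2!congr (_ * _).
  by apply: eq_bigr => j _; rewrite mnmE.
rewrite (bigD1 i) //= sum_top_weight_hasse ?hasse_mx_unit ?size_polyXn //.
- by rewrite coefXn eq_sym ltn_eqF ?ltn_predRL // mul0r mulr0.
- exact: ltnW.
- exact: ltnW (size_hasse_nodes_lt i).
Qed.

Hypothesis S0 : forall i, 0 \in S i.
Hypothesis m0 : forall i, m i 0 = 1%N.

Lemma hasse_node_mem (f : {ffun 'I_n -> 'I_N}) i : (f i < size (L i))%N ->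
  (hasse_node f i).1 \in S i /\ ((hasse_node f i).2 < m i (hasse_node f i).1)%N.
Proof.
move=> lt_fi; have := mem_nth origin lt_fi.
by rewrite -/(hasse_node f i) [hasse_node f i]surjective_pairing mem_hasse_nodes => /andP.
Qed.

Lemma weighted_hasse_sum_origin p :
  (forall x, (forall i, x i \in S i) -> (exists i, x i != 0) ->
     order_ge (p \mPo shift x) (msum m x + 1 - n)) ->
  weighted_hasse_sum p =
    (\prod_i top_weight (L i) (index origin (L i))) * (p \mPo shift (fun=> 0))@_0.
Proof.
move=> p_vanish.
have origin_L i : origin \in L i by rewrite mem_hasse_nodes S0 m0.
have index_lt i : (index origin (L i) < N)%N.
  by rewrite (ltn_trans _ (size_hasse_nodes_lt i)) // index_mem.
pose f0 : {ffun 'I_n -> 'I_N} := [ffun i => Ordinal (index_lt i)].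
have node_f0 i : hasse_node f0 i = origin by rewrite /hasse_node ffunE nth_index.
rewrite /weighted_hasse_sum (bigD1 f0) //= [X in _ + X]big1 ?addr0 => [|f f_neq_f0].
  congr (_ * _); first by apply: eq_bigr => i _; rewrite ffunE.
  have -> : shift (fun i => (hasse_node f0 i).1) = shift (fun=> 0).
    by apply: eq_mktuple => i; rewrite node_f0.
  by congr mcoeff; apply/mnmP => i; rewrite mnmE mnm0E node_f0.
have [/forallP in_range | ] := boolP [forall i, f i < size (L i)]%N; last first.
  rewrite negb_forall => /existsP [i out_i].
  by rewrite (bigD1 i) //= top_weight_out ?mul0r // leqNgt.
pose x i := (hasse_node f i).1.
have x_S i : x i \in S i by case: (hasse_node_mem (in_range i)).
have [/existsP [i x_i_neq0] | /existsPn x_eq0] := boolP [exists i, x i != 0].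
  rewrite (p_vanish x x_S (ex_intro _ i x_i_neq0)) ?mulr0 //.
  have : (mdeg [multinom (hasse_node f i).2 | i < n] + n <= msum m x)%N.
    rewrite mdegE -[n in (_ + n)%N]card_ord -sum1_card -big_split /=.
    by apply: leq_sum => j _; rewrite mnmE addn1; case: (hasse_node_mem (in_range j)).
  by move: (mdeg _) (msum m x) => u v; lia.
case/eqP: f_neq_f0; apply/ffunP => i; apply/val_inj; rewrite ffunE /=.
have x0 : x i = 0 by apply/eqP; rewrite -[_ == _]negbK x_eq0.
have [_] := hasse_node_mem (in_range i); rewrite -/(x i) x0 m0 ltnS leqn0 => /eqP a0.
have node_i : hasse_node f i = origin by rewrite [hasse_node f i]surjective_pairing -/(x i) x0 a0.
by rewrite -node_i index_uniq ?uniq_hasse_nodes.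
Qed.

End WeightedHasseSum.
End Multivariate.

Theorem theorem5 (F : fieldType) (n : nat) (S : 'I_n -> seq F)
  (m : 'I_n -> F -> nat) (Hs : seq (hyperplane F n)) :
  (forall i, uniq (S i)) ->
  (forall i s, s \in S i -> (0 < m i s)%N) ->
  (forall i, (0 : F) \in S i) ->
  (forall i, m i 0 = 1%N) ->
  (forall H, H \in Hs -> is_hyperplane H) ->
  (forall x : 'I_n -> F, (forall i, x i \in S i) -> (exists i, x i != 0) ->
     (msum m x + 1 <= num_containing Hs x + n)%N) ->
  (forall H, H \in Hs -> ~~ on_hyperplane H (fun _ => 0)) ->
  (\sum_(i < n) dmult (S i) (m i) <= size Hs + n)%N.
Proof.
move=> uniqS _ S0 m0 _ covered origin_uncovered.
under eq_bigr => i _ do rewrite /dmult -size_hasse_nodes.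
rewrite leqNgt; apply/negP => lt_Hs.
have := weighted_hasse_sum_eq0 uniqS (deg_le_hyperplanes_poly (Hs := Hs)) lt_Hs.
rewrite (weighted_hasse_sum_origin uniqS S0 m0) => [|x x_S x_neq0]; last first.
  apply: order_ge_le (order_ge_hyperplanes_poly_shift (Hs := Hs) (s := x)).
  by rewrite leq_subLR addnC add1n -addn1 [(n + _)%N]addnC covered.
apply/eqP; apply: mulf_neq0.
  by apply/prodf_neq0 => i _; apply: top_weight_origin_neq0.
rewrite mcoeff0_hyperplanes_poly_shift prodf_seq_neq0; apply/allP => H H_in.
exact: origin_uncovered.
Qed.
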